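(* Let $(\boldsymbol A,\mathcal S)$ be a data pair and $\boldsymbol M$, $\rho$, $d_\rho$ as in the context. Then (i) for all $z\in\mathbb H$, \[ \|\boldsymbol M(z)\|_2\le\frac{1}{d_\rho(z)},\qquad (\operatorname{Im}z)\|\boldsymbol M(z)^{-1}\|_2^{-2}\,1\le\operatorname{Im}\boldsymbol M(z)\le\frac{\operatorname{Im}z}{d_\rho(z)^2}\,1,\qquad \|\boldsymbol M(z)^{-1}\|_2\le|z|+\|\boldsymbol A\|_2+\|\mathcal S\|\,\|\boldsymbol M(z)\|_2; \] (ii) for all $z\in\mathbb H$, $\rho(z)\le\dfrac{\operatorname{Im}z}{\pi d_\rho(z)^2}$.
   Context: $\mathbb H=\{w\in\mathbb C:\operatorname{Im}w>0\}$. On $\mathbb C^{n\times n}$: $\langle\boldsymbol R,\boldsymbol T\rangle=\frac1n\operatorname{Tr}(\boldsymbol R^*\boldsymbol T)$, $\langle\boldsymbol R\rangle=\frac1n\operatorname{Tr}\boldsymbol R$, $\|\cdot\|_2$ the operator norm induced by the Euclidean norm, $\|\mathcal S\|$ the operator norm of a linear map $\mathcal S$ on $\mathbb C^{n\times n}$ induced by $\|\cdot\|_2$; inequalities between Hermitian matrices are in the positive semidefinite order. A data pair $(\boldsymbol A,\mathcal S)$: $\boldsymbol A\in\mathbb C^{n\times n}$ with $\operatorname{Im}\boldsymbol A=\frac1{2i}(\boldsymbol A-\boldsymbol A^* )\le0$, and $\mathcal S$ linear, self-adjoint w.r.t. $\langle\cdot,\cdot\rangle$, positivity preserving. $\boldsymbol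 M(z)$ is the unique solution of $-\boldsymbol M(z)^{-1}=z1-\boldsymbol A+\mathcal S[\boldsymbol M(z)]$ with positive definite imaginary part; it has the representation $\boldsymbol M(z)=\int\frac{\boldsymbol V(d\tau)}{\tau-z}$ with a unique positive semidefinite matrix-valued measure $\boldsymbol V$, $\boldsymbol V(\mathbb R)=1$. The self-consistent density of states is $\rho(d\tau)=\frac1n\operatorname{Tr}\boldsymbol V(d\tau)$, its harmonic extension is $\rho(z)=\frac1\pi\langle\operatorname{Im}\boldsymbol M(z)\rangle$, and $d_\rho(z)=\operatorname{dist}(z,\operatorname{supp}\rho)$. *)

From HB Require Import structures.
From mathcomp Require Import all_boot all_order all_algebra.
From mathcomp Require Import all_classical all_reals all_analysis.
From mathcomp Require Import complex.
Set Implicit Arguments. Unset Strict Implicit. Unset Printing Implicit Defensive.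
Import Order.TTheory GRing.Theory.
Local Open Scope ring_scope.
Local Open Scope classical_set_scope.

Section Defs.
Variables (R : realType) (n : nat).
Local Notation C := R[i].
Local Notation Mx := 'M[C]_n.

Definition rC (r : R) : C := Complex r 0.
Definition iC : C := Complex 0 1.

Definition mxstar p q (X : 'M[C]_(p, q)) : 'M[C]_(q, p) := map_mx (@conjc R) X^T.

Definition qform (X : Mx) (x : 'cV[C]_n) : C := (mxstar x *m X *m x) 0 0.

(* positive semidefinite / positive definite Hermitian matrices;
   the order on C is the standard partial order (0 <= c iff c real, >= 0) *)
Definition hermitian (X : Mx) : Prop := mxstar X = X.
Definition psd (X : Mx) : Prop := hermitian X /\ forall x, 0 <= qform X x.
Definition posdef (X : Mx) : Prop :=
  hermitian X /\ forall x, x != 0 -> 0 < qform X x.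
Definition mxle (X Y : Mx) : Prop := psd (Y - X).

Definition ImM (X : Mx) : Mx := (2%:R * iC)^-1 *: (X - mxstar X).

Definition mxinner (X Y : Mx) : C := (n%:R)^-1 * \tr (mxstar X *m Y).
Definition mxavg (X : Mx) : C := (n%:R)^-1 * \tr X.

Definition vnorm (x : 'cV[C]_n) : R :=
  Num.sqrt (\sum_i (complex.Re (x i 0) ^+ 2 + complex.Im (x i 0) ^+ 2)).
Definition opnorm (X : Mx) : R :=
  sup [set vnorm (X *m x) | x in [set x | vnorm x <= 1]].
Definition opnormS (S : Mx -> Mx) : R :=
  sup [set opnorm (S X) | X in [set X | opnorm X <= 1]].

Definition data_pair (A : Mx) (S : {linear Mx -> Mx}) : Prop :=
  mxle (ImM A) 0 /\
  (forall X Y, mxinner X (S Y) = mxinner (S X) Y) /\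
  (forall X, psd X -> psd (S X)).

Definition solves_MDE (A : Mx) (S : Mx -> Mx) (M : C -> Mx) : Prop :=
  forall z : C, 0 < complex.Im z ->
    [/\ M z \in unitmx,
        - invmx (M z) = z%:M - A + S (M z)
      & posdef (ImM (M z))].

Definition cintegral (mu : {measure set R -> \bar R}) (f : R -> C) : C :=
  rC (Rintegral mu setT (fun t => complex.Re (f t)))
  + iC * rC (Rintegral mu setT (fun t => complex.Im (f t))).

(* V : Borel sets -> n x n matrices is a positive semidefinite
   matrix-valued measure with M(z) = \int V(dt)/(t - z) on H: for each vector
   x, B |-> x^star V(B) x is a finite (nonnegative) measure mu_x on the Borel sets
   of R, and x^star M(z) x = \int mu_x(dt)/(t - z).  (Quadratic forms determine
   complex matrices, so this is the entrywise definition written out.) *)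
Definition matrix_measure_repr (V : set R -> Mx) (M : C -> Mx) : Prop :=
  forall x : 'cV[C]_n, exists mu : {measure set R -> \bar R},
    (forall B, measurable B ->
       psd (V B) /\ complex.Im (qform (V B) x) = 0 /\
       mu B = (complex.Re (qform (V B) x))%:E) /\
    (forall z : C, 0 < complex.Im z ->
       qform (M z) x = cintegral mu (fun t => (rC t - z)^-1)).

Definition rho_meas (V : set R -> Mx) (B : set R) : R :=
  complex.Re (mxavg (V B)).

Definition supp_rho (V : set R -> Mx) : set R :=
  [set t | forall e : R, 0 < e -> 0 < rho_meas V [set s | t - e < s < t + e]].

Definition d_rho (V : set R -> Mx) (z : C) : R :=
  inf [set Normc.normc (z - rC t) | t in supp_rho V].

Definition rho_harm (M : C -> Mx) (z : C) : R :=
  pi^-1 * complex.Re (mxavg (ImM (M z))).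

End Defs.

From Pilot Require Import Defs.
From HB Require Import structures.
From mathcomp Require Import all_boot all_order all_algebra.
From mathcomp Require Import all_classical all_reals all_analysis.
From mathcomp Require Import complex.
From mathcomp Require Import ring lra.
Import Order.TTheory GRing.Theory Num.Theory.
Import numFieldNormedType.Exports.
Import Defs.
Local Open Scope ring_scope.
Local Open Scope classical_set_scope.
Local Open Scope complex_scope.
Set Implicit Arguments. Unset Strict Implicit. Unset Printing Implicit Defensive.

(* The Dyson equation gives [Im (x^* M(z) x) >= Im z |M(z) x|^2], since
   [Im A <= 0] and the positivity preserving [S] commutes with taking
   imaginary parts.  The Stieltjes representation gives
   [Im (x^* M x) = \int Im z / |t - z|^2 mu_x(dt) <= Im z / d_rho(z)^2 |x|^2],
   because [mu_x] does not charge the complement of [supp rho] and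
   [mu_x(R) = |x|^2].  Comparing the two bounds gives [|M| <= 1 / d_rho] and the
   two matrix inequalities for [Im M]; the bound on [|M^-1|] is the triangle
   inequality in the Dyson equation, and averaging the upper bound over the
   standard basis bounds [rho(z)]. *)

Section ComplexFacts.
Variable R : rcfType.
Local Notation C := R[i].
Local Notation Re := (@complex.Re R).
Local Notation Im := (@complex.Im R).
Local Notation normc := (@Normc.normc R).
Implicit Types (x y : C) (r : R).

Lemma ImD x y : Im (x + y) = Im x + Im y.
Proof. exact: (raddfD (Im : Rcomplex R -> R)). Qed.
Lemma ImN x : Im (- x) = - Im x.
Proof. exact: (raddfN (Im : Rcomplex R -> R)). Qed.
Lemma ImB x y : Im (x - y) = Im x - Im y.
Proof. exact: (raddfB (Im : Rcomplex R -> R)). Qed.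
Lemma Re_sum (I : Type) (s : seq I) (P : pred I) (F : I -> C) :
  Re (\sum_(i <- s | P i) F i) = \sum_(i <- s | P i) Re (F i).
Proof. exact: (raddf_sum (Re : Rcomplex R -> R)). Qed.

Lemma Im_mul x y : Im (x * y) = Re x * Im y + Im x * Re y.
Proof. by case: x y => a b [c d]. Qed.
Lemma Re_rCM r x : Re (r%:C * x) = r * Re x.
Proof. by case: x => a b /=; rewrite mul0r subr0. Qed.
Lemma Im_conjc x : Im (conjc x) = - Im x.
Proof. by case: x. Qed.

Lemma conjc_Im0 x : conjc x = x -> Im x = 0.
Proof. by case: x => a b [] /= h; lra. Qed.
Lemma Im0_real x : Im x = 0 -> x = (Re x)%:C.
Proof. by case: x => a b /= ->. Qed.

Lemma normc_ge0 x : 0 <= normc x.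
Proof. by case: x => a b; apply: sqrtr_ge0. Qed.
Lemma normc_sqr x : normc x ^+ 2 = Re x ^+ 2 + Im x ^+ 2.
Proof. by case: x => a b; rewrite /= sqr_sqrtr // addr_ge0 ?sqr_ge0. Qed.
Lemma normc_rC r : normc r%:C = `|r|.
Proof. by rewrite /= expr0n addr0 sqrtr_sqr. Qed.
Lemma normc_conjc x : normc (conjc x) = normc x.
Proof. by case: x => a b /=; rewrite sqrrN. Qed.
Lemma mulJc x : conjc x * x = (normc x ^+ 2)%:C.
Proof.
rewrite normc_sqr; case: x => a b; apply/eqP; rewrite eq_complex /=.
by apply/andP; split; apply/eqP; ring.
Qed.
Lemma Im_le_normc x : `|Im x| <= normc x.
Proof.
rewrite -ler_sqr ?nnegrE ?normc_ge0 // real_normK ?num_real // normc_sqr.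
by rewrite lerDr sqr_ge0.
Qed.
Lemma Im_inv_real_sub x r : Im ((r%:C - x)^-1) = Im x / ((r - Re x) ^+ 2 + Im x ^+ 2).
Proof. by case: x => a b; rewrite /= sub0r sqrrN mulNr opprK. Qed.
Lemma normc_sub_real x r : normc (x - r%:C) ^+ 2 = (r - Re x) ^+ 2 + Im x ^+ 2.
Proof. by rewrite normc_sqr; case: x => a b /=; rewrite subr0 -sqrrN opprB. Qed.

Lemma normc_sum (I : Type) (s : seq I) (P : pred I) (F : I -> C) :
  normc (\sum_(i <- s | P i) F i) <= \sum_(i <- s | P i) normc (F i).
Proof.
elim/big_rec2: _ => [|i a b _ IH]; first by rewrite Normc.normc0.
by rewrite (le_trans (le_normcD _ _)) // lerD2l.
Qed.
End ComplexFacts.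

Section Adjoint.
Variable R : realType.
Local Notation C := R[i].

Lemma mxstarE p q (X : 'M[C]_(p, q)) i j : mxstar X i j = conjc (X j i).
Proof. by rewrite !mxE. Qed.

Lemma mxstarK p q (X : 'M[C]_(p, q)) : mxstar (mxstar X) = X.
Proof. by apply/matrixP => i j; rewrite !mxstarE conjcK. Qed.

Lemma mxstarD p q (X Y : 'M[C]_(p, q)) : mxstar (X + Y) = mxstar X + mxstar Y.
Proof. by apply/matrixP => i j; rewrite !(mxstarE, mxE) rmorphD. Qed.

Lemma mxstarN p q (X : 'M[C]_(p, q)) : mxstar (- X) = - mxstar X.
Proof. by apply/matrixP => i j; rewrite !(mxstarE, mxE) rmorphN. Qed.

Lemma mxstarB p q (X Y : 'M[C]_(p, q)) : mxstar (X - Y) = mxstar X - mxstar Y.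
Proof. by rewrite mxstarD mxstarN. Qed.

Lemma mxstarZ p q (c : C) (X : 'M[C]_(p, q)) :
  mxstar (c *: X) = conjc c *: mxstar X.
Proof. by apply/matrixP => i j; rewrite !(mxstarE, mxE) rmorphM. Qed.

Lemma mxstarM p q r (X : 'M[C]_(p, q)) (Y : 'M[C]_(q, r)) :
  mxstar (X *m Y) = mxstar Y *m mxstar X.
Proof. by rewrite /mxstar trmx_mul map_mxM. Qed.

Lemma mxstar_scalar m (c : C) : mxstar (c%:M : 'M[C]_m) = (conjc c)%:M.
Proof. by rewrite /mxstar tr_scalar_mx map_scalar_mx. Qed.
End Adjoint.

Section Forms.
Variables (R : realType) (n : nat).
Local Notation C := R[i].
Local Notation Re := (@complex.Re R).
Local Notation Im := (@complex.Im R).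
Local Notation normc := (@Normc.normc R).
Local Notation Mx := 'M[C]_n.
Local Notation cv := 'cV[C]_n.
Implicit Types (X Y : Mx) (x u v w : cv).

Definition sesq X u v : C := (mxstar u *m X *m v) 0 0.

Lemma qform_sesq X x : qform X x = sesq X x x. Proof. by []. Qed.

Lemma sesqDl X u v w : sesq X (u + v) w = sesq X u w + sesq X v w.
Proof. by rewrite /sesq mxstarD !mulmxDl mxE. Qed.
Lemma sesqDr X u v w : sesq X u (v + w) = sesq X u v + sesq X u w.
Proof. by rewrite /sesq mulmxDr mxE. Qed.
Lemma sesqZl X c u v : sesq X (c *: u) v = conjc c * sesq X u v.
Proof. by rewrite /sesq mxstarZ -!scalemxAl mxE. Qed.
Lemma sesqZr X c u v : sesq X u (c *: v) = c * sesq X u v.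
Proof. by rewrite /sesq -scalemxAr mxE. Qed.
Lemma sesq_delta X i j : sesq X (delta_mx i 0) (delta_mx j 0) = X i j.
Proof.
rewrite /sesq; have -> : mxstar (delta_mx i 0 : cv) = delta_mx 0 i.
  by apply/matrixP => a b; rewrite mxstarE !mxE (ord1 a) eqxx andbT conjc_nat.
by rewrite -rowE -colE !mxE.
Qed.

Lemma qformD X Y x : qform (X + Y) x = qform X x + qform Y x.
Proof. by rewrite /qform mulmxDr mulmxDl mxE. Qed.
Lemma qformN X x : qform (- X) x = - qform X x.
Proof. by rewrite /qform mulmxN mulNmx mxE. Qed.
Lemma qformB X Y x : qform (X - Y) x = qform X x - qform Y x.
Proof. by rewrite qformD qformN. Qed.
Lemma qformZ c X x : qform (c *: X) x = c * qform X x.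
Proof. by rewrite /qform -scalemxAr -scalemxAl mxE. Qed.
Lemma qform_mxstar X x : qform (mxstar X) x = conjc (qform X x).
Proof.
rewrite /qform -[conjc _](mxstarE (mxstar x *m X *m x)).
by rewrite !mxstarM mxstarK mulmxA.
Qed.

Lemma vnorm_ge0 v : 0 <= vnorm v.
Proof. exact: sqrtr_ge0. Qed.
Lemma vnorm_sqr v : vnorm v ^+ 2 = \sum_i normc (v i 0) ^+ 2.
Proof.
rewrite sqr_sqrtr; last by apply: sumr_ge0 => i _; rewrite addr_ge0 ?sqr_ge0.
by apply: eq_bigr => i _; rewrite normc_sqr.
Qed.
Lemma vnormE v : vnorm v = Num.sqrt (\sum_i normc (v i 0) ^+ 2).
Proof. by rewrite -vnorm_sqr sqrtr_sqr ger0_norm ?vnorm_ge0. Qed.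

Lemma qform_scalar c x : qform (c%:M : Mx) x = c * (vnorm x ^+ 2)%:C.
Proof.
rewrite /qform -mulmxA mul_scalar_mx -scalemxAr mxE vnorm_sqr rmorph_sum mxE.
by congr (_ * _); apply: eq_bigr => i _; rewrite mxstarE; apply: mulJc.
Qed.

Lemma hermitianD X Y : hermitian X -> hermitian Y -> hermitian (X + Y).
Proof. by rewrite /hermitian mxstarD => -> ->. Qed.
Lemma hermitianB X Y : hermitian X -> hermitian Y -> hermitian (X - Y).
Proof. by rewrite /hermitian mxstarB => -> ->. Qed.
Lemma hermitianZ (r : R) X : hermitian X -> hermitian (r%:C *: X).
Proof. by rewrite /hermitian mxstarZ conjc_real => ->. Qed.
Lemma hermitian_scalar (r : R) : hermitian (r%:C%:M : Mx).
Proof. by rewrite /hermitian mxstar_scalar conjc_real. Qed.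

Lemma hermitian_qform_real X x : hermitian X -> qform X x = (Re (qform X x))%:C.
Proof. by move=> hX; apply/Im0_real/conjc_Im0; rewrite -qform_mxstar hX. Qed.

Lemma psd_qform X x : psd X -> qform X x = (Re (qform X x))%:C /\ 0 <= Re (qform X x).
Proof.
case=> hX X0; split; first exact: hermitian_qform_real.
by have := X0 x; rewrite lecE => /andP[].
Qed.

Lemma psd_scalar (r : R) : 0 <= r -> psd (r%:C%:M : Mx).
Proof.
move=> r0; split=> [|x]; first exact: hermitian_scalar.
by rewrite qform_scalar -rmorphM lecR mulr_ge0 ?sqr_ge0.
Qed.

Lemma Re_mxavg X : Re (mxavg X) = n%:R^-1 * Re (\tr X).
Proof. by rewrite /mxavg -Re_rCM fmorphV rmorph_nat. Qed.

Lemma posdef_psd X : posdef X -> psd X.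
Proof.
case=> hX X0; split=> // x; have [->|/X0/ltW//] := eqVneq x 0.
by rewrite /qform mulmx0 mxE.
Qed.

Lemma mxleP X Y : hermitian X -> hermitian Y ->
  (forall x, Re (qform X x) <= Re (qform Y x)) -> mxle X Y.
Proof.
move=> hX hY XY; split=> [|x]; first exact: hermitianB.
rewrite qformB (hermitian_qform_real x hX) (hermitian_qform_real x hY).
by rewrite -rmorphB lecR subr_ge0.
Qed.

Lemma ImM_scale X : (2%:R * iC R) *: ImM X = X - mxstar X.
Proof.
rewrite /ImM scalerA mulfV ?scale1r // mulf_neq0 ?pnatr_eq0 //.
by apply/eqP => /(congr1 Im) /eqP; rewrite oner_eq0.
Qed.

Lemma hermitian_ImM X : hermitian (ImM X).
Proof.
have conj_2i : conjc (2%:R * iC R) = - (2%:R * iC R).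
  by apply/eqP; rewrite eq_complex; apply/andP; split; apply/eqP => /=; ring.
rewrite /hermitian /ImM mxstarZ mxstarB mxstarK conjc_inv conj_2i.
by rewrite invrN scaleNr -scalerN opprB.
Qed.

Lemma qform_ImM X x : qform (ImM X) x = (Im (qform X x))%:C.
Proof.
rewrite /ImM qformZ qformB qform_mxstar.
case: (qform X x) => a b; apply/eqP; rewrite eq_complex /=.
by apply/andP; split; apply/eqP; field.
Qed.
End Forms.

Section PsdTrace.
Variables (R : realType) (n : nat).
Local Notation C := R[i].
Local Notation Re := (@complex.Re R).
Local Notation Mx := 'M[C]_n.
Implicit Types (P : Mx).

Lemma psd_diag_ge0 P i : psd P -> 0 <= P i i.
Proof. by case=> _ /(_ (delta_mx i 0)); rewrite qform_sesq sesq_delta. Qed.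

(* Testing [P] on [c e_i + e_j] with [c = - P i j] gives [- 2 |P i j|^2 >= 0]. *)
Lemma psd_diag0_eq0 P : psd P -> (forall i, P i i = 0) -> P = 0.
Proof.
move=> [hP Pge0] P0; apply/matrixP => i j; rewrite mxE.
have Pji : P j i = conjc (P i j) by rewrite -[in LHS]hP mxstarE.
have := Pge0 (- P i j *: delta_mx i 0 + delta_mx j 0).
rewrite qform_sesq !(sesqDl, sesqDr, sesqZl, sesqZr, sesq_delta) !P0 Pji.
case: (P i j) => a b; rewrite lecE /= => /andP[_ h].
have a0 : a ^+ 2 = 0 by nra.
have b0 : b ^+ 2 = 0 by nra.
by apply/eqP; rewrite eq_complex /= -[a == 0]sqrf_eq0 -[b == 0]sqrf_eq0 a0 b0 eqxx.
Qed.

Lemma psd_trace_le0 P : psd P -> Re (\tr P) <= 0 -> P = 0.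
Proof.
move=> Ppsd tr_le0; apply: psd_diag0_eq0 => // i.
have diag_ge0 k : true -> 0 <= P k k by move=> _; apply: psd_diag_ge0.
have tr_ge0 : 0 <= \tr P by apply: sumr_ge0.
apply: (psumr_eq0P diag_ge0) => //; apply/le_anti; rewrite -/(\tr P) tr_ge0 andbT.
by move: tr_ge0; rewrite !lecE => /andP[/eqP <- _]; rewrite eqxx.
Qed.
End PsdTrace.

Lemma sum_mul_le_sqrt (R : rcfType) (I : finType) (a b : I -> R) :
  \sum_i a i * b i <= Num.sqrt (\sum_i a i ^+ 2) * Num.sqrt (\sum_i b i ^+ 2).
Proof.
set A := \sum_i a i ^+ 2; set B := \sum_i b i ^+ 2; set P := \sum_i a i * b i.
have A0 : 0 <= A by apply: sumr_ge0 => i _; apply: sqr_ge0.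
have B0 : 0 <= B by apply: sumr_ge0 => i _; apply: sqr_ge0.
rewrite -sqrtrM // (le_trans (ler_norm P)) // -sqrtr_sqr ler_wsqrtr //.
have [Bz|Bnz] := eqVneq B 0.
  have b0 i : b i = 0.
    by apply/eqP; rewrite -sqrf_eq0 (psumr_eq0P (fun i _ => sqr_ge0 (b i)) Bz).
  by rewrite /P big1 ?expr0n ?mulr_ge0 // => i _; rewrite b0 mulr0.
have Bpos : 0 < B by rewrite lt0r Bnz.
(* Lagrange: the sum of squares below equals [B (A B - P^2)] *)
have : 0 <= \sum_i (B * a i - P * b i) ^+ 2 by apply: sumr_ge0 => i _; apply: sqr_ge0.
have -> : \sum_i (B * a i - P * b i) ^+ 2 = B * (A * B - P ^+ 2).
  transitivity (\sum_i (B ^+ 2 * a i ^+ 2 - (2%:R * B * P) * (a i * b i)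
                        + P ^+ 2 * b i ^+ 2)).
    by apply: eq_bigr => i _; ring.
  rewrite !big_split sumrN /= -!mulr_sumr -/A -/B -/P; ring.
by rewrite pmulr_rge0 // subr_ge0 mulrC.
Qed.

Section Norms.
Variables (R : realType) (n : nat).
Local Notation C := R[i].
Local Notation normc := (@Normc.normc R).
Local Notation Mx := 'M[C]_n.
Local Notation cv := 'cV[C]_n.
Implicit Types (X Y : Mx) (u v x : cv).

Lemma vnorm_entry v i : normc (v i 0) <= vnorm v.
Proof.
rewrite -ler_sqr ?nnegrE ?normc_ge0 ?vnorm_ge0 // vnorm_sqr (bigD1 i) //= lerDl.
by apply: sumr_ge0 => j _; apply: sqr_ge0.
Qed.

Lemma vnorm0 : vnorm (0 : cv) = 0.
Proof. by rewrite vnormE big1 ?sqrtr0 // => i _; rewrite mxE Normc.normc0 expr0n. Qed.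

Lemma vnorm_eq0 v : vnorm v = 0 -> v = 0.
Proof.
move=> v0; apply/matrixP => i j; rewrite (ord1 j) mxE; apply: Normc.eq0_normc.
by apply/le_anti; rewrite normc_ge0 andbT -v0 vnorm_entry.
Qed.

Lemma vnormZ c v : vnorm (c *: v) = normc c * vnorm v.
Proof.
apply/eqP; rewrite -(@eqrXn2 _ 2) ?mulr_ge0 ?normc_ge0 ?vnorm_ge0 //.
rewrite exprMn !vnorm_sqr mulr_sumr; apply/eqP/eq_bigr => i _.
by rewrite mxE Normc.normcM exprMn.
Qed.

Lemma vnormD u v : vnorm (u + v) <= vnorm u + vnorm v.
Proof.
rewrite -ler_sqr ?nnegrE ?addr_ge0 ?vnorm_ge0 // sqrrD !vnorm_sqr.
set a := fun i => normc (u i 0); set b := fun i => normc (v i 0).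
have : \sum_i normc ((u + v) i 0) ^+ 2 <= \sum_i (a i + b i) ^+ 2.
  apply: ler_sum => i _; rewrite mxE ler_sqr ?nnegrE ?addr_ge0 ?normc_ge0 //.
  exact: le_normcD.
move/le_trans; apply.
have -> : \sum_i (a i + b i) ^+ 2 =
    \sum_i a i ^+ 2 + \sum_i b i ^+ 2 + (\sum_i a i * b i) *+ 2.
  by rewrite -mulr_natr mulr_suml -!big_split /=; apply: eq_bigr => i _; ring.
rewrite [leRHS]addrAC lerD2l lerMn2r /= !vnormE.
exact: sum_mul_le_sqrt.
Qed.

Lemma vnorm_delta (j : 'I_n) : vnorm (delta_mx j 0 : cv) = 1.
Proof.
rewrite vnormE (bigD1 j) //= big1 => [|i ij]; last first.
  by rewrite mxE (negPf ij) Normc.normc0 expr0n.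
by rewrite mxE !eqxx Normc.normc1 expr1n addr0 sqrtr1.
Qed.

Definition rowsum_norm (B : 'I_n -> 'I_n -> R) : R :=
  Num.sqrt (\sum_i (\sum_j B i j) ^+ 2).

Lemma vnorm_mulmx_le X B v : (forall i j, normc (X i j) <= B i j) ->
  vnorm (X *m v) <= rowsum_norm B * vnorm v.
Proof.
move=> XB; rewrite -ler_sqr ?nnegrE ?mulr_ge0 ?sqrtr_ge0 ?vnorm_ge0 //.
rewrite exprMn [vnorm (X *m v) ^+ 2]vnorm_sqr sqr_sqrtr; last first.
  by apply: sumr_ge0 => i _; apply: sqr_ge0.
rewrite mulr_suml; apply: ler_sum => i _; rewrite -exprMn.
rewrite ler_sqr ?nnegrE ?normc_ge0 ?mulr_ge0 ?vnorm_ge0 //; last first.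
  by apply: sumr_ge0 => j _; apply: le_trans (XB i j); apply: normc_ge0.
rewrite mxE (le_trans (normc_sum _ _ _)) // mulr_suml; apply: ler_sum => j _.
by rewrite Normc.normcM; apply: ler_pM; rewrite ?normc_ge0 ?vnorm_entry ?XB.
Qed.

Lemma opnorm_ub X x : vnorm x <= 1 -> vnorm (X *m x) <= opnorm X.
Proof.
move=> x1; apply: ub_le_sup; last by exists x.
exists (rowsum_norm (fun i j => normc (X i j))) => _ [y /= y1 <-].
rewrite (le_trans (vnorm_mulmx_le y (fun i j => lexx _))) //.
by rewrite ler_piMr ?sqrtr_ge0.
Qed.

Lemma opnorm_le X b :
  (forall x, vnorm x <= 1 -> vnorm (X *m x) <= b) -> opnorm X <= b.
Proof.
move=> Xb; apply: ge_sup => [|_ [x /= x1 <-]]; last exact: Xb.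
by exists (vnorm (X *m 0)), 0 => //=; rewrite vnorm0 ler01.
Qed.

Lemma opnorm_ge0 X : 0 <= opnorm X.
Proof. by rewrite -vnorm0 -(mulmx0 _ X) opnorm_ub ?vnorm0. Qed.

Lemma opnorm_mulmx X v : vnorm (X *m v) <= opnorm X * vnorm v.
Proof.
have [v0|v_neq0] := eqVneq (vnorm v) 0.
  by rewrite (vnorm_eq0 v0) mulmx0 vnorm0 mulr0.
have v_gt0 : 0 < vnorm v by rewrite lt0r v_neq0 vnorm_ge0.
have := @opnorm_ub X ((vnorm v)^-1%:C *: v).
rewrite -scalemxAr !vnormZ normc_rC ger0_norm ?invr_ge0 ?vnorm_ge0 // mulVf //.
by rewrite lexx mulrC ler_pdivrMr // mulrC => /(_ isT).
Qed.

Lemma opnorm_entry X i j : normc (X i j) <= opnorm X.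
Proof.
have := @opnorm_ub X (delta_mx j 0); rewrite vnorm_delta lexx => /(_ isT).
by apply: le_trans; rewrite -colE; move: (vnorm_entry (col j X) i); rewrite mxE.
Qed.

Lemma opnormD X Y : opnorm (X + Y) <= opnorm X + opnorm Y.
Proof.
apply: opnorm_le => x x1; rewrite mulmxDl (le_trans (vnormD _ _)) //.
by apply: lerD; apply: opnorm_ub.
Qed.

Lemma opnormZ_le c X : opnorm (c *: X) <= normc c * opnorm X.
Proof.
apply: opnorm_le => x x1; rewrite -scalemxAl vnormZ.
by rewrite ler_wpM2l ?normc_ge0 ?opnorm_ub.
Qed.

Lemma opnormN X : opnorm (- X) = opnorm X.
Proof.
have N_le Y : opnorm (- Y) <= opnorm Y.
  by rewrite -scaleN1r (le_trans (opnormZ_le _ _)) // normcN Normc.normc1 mul1r.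
by apply/le_anti; rewrite N_le -{1}(opprK X) N_le.
Qed.

Lemma opnorm_scalar c : opnorm (c%:M : Mx) <= normc c.
Proof.
apply: opnorm_le => x x1; rewrite mul_scalar_mx vnormZ.
by rewrite ler_piMr ?normc_ge0.
Qed.

(* The supremum defining [opnormS S] is finite: expanding [Y] in matrix units
   bounds [S Y] entrywise uniformly in [opnorm Y <= 1]. *)
Lemma opnormS_ub (S : {linear Mx -> Mx}) X : opnorm X <= 1 -> opnorm (S X) <= opnormS S.
Proof.
move=> X1; apply: ub_le_sup; last by exists X.
pose B k l := \sum_i \sum_j normc (S (delta_mx i j) k l).
exists (rowsum_norm B) => _ [Y /= Y1 <-].
have SY_B k l : normc (S Y k l) <= B k l.
  rewrite {1}(matrix_sum_delta Y) linear_sum summxE (le_trans (normc_sum _ _ _)) //.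
  apply: ler_sum => i _; rewrite linear_sum summxE (le_trans (normc_sum _ _ _)) //.
  apply: ler_sum => j _; rewrite linearZ mxE Normc.normcM.
  by rewrite ler_piMl ?normc_ge0 // (le_trans (opnorm_entry _ _ _)).
apply: opnorm_le => x x1; rewrite (le_trans (vnorm_mulmx_le x SY_B)) //.
by rewrite ler_piMr ?sqrtr_ge0.
Qed.

Lemma opnorm_linear_le (S : {linear Mx -> Mx}) Y :
  opnorm (S Y) <= opnormS S * opnorm Y.
Proof.
have [Y0|Y_neq0] := eqVneq (opnorm Y) 0.
  rewrite Y0 mulr0 (_ : Y = 0) ?linear0; last first.
    apply/matrixP => i j; rewrite mxE; apply: Normc.eq0_normc.
    by apply/le_anti; rewrite normc_ge0 andbT -Y0 opnorm_entry.
  by apply: opnorm_le => x _; rewrite mul0mx vnorm0.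
set m := opnorm Y in Y_neq0 *.
have m_gt0 : 0 < m by rewrite lt0r Y_neq0 opnorm_ge0.
have Y1 : opnorm (m^-1%:C *: Y) <= 1.
  rewrite (le_trans (opnormZ_le _ _)) // normc_rC ger0_norm ?invr_ge0 ?(ltW m_gt0) //.
  by rewrite mulVf.
have -> : S Y = m%:C *: S (m^-1%:C *: Y).
  by rewrite linearZ scalerA -rmorphM mulfV // rmorph1 scale1r.
rewrite (le_trans (opnormZ_le _ _)) // normc_rC ger0_norm ?(ltW m_gt0) //.
by rewrite mulrC ler_wpM2r ?(ltW m_gt0) ?opnormS_ub.
Qed.
End Norms.

Section DysonEquation.
Variables (R : realType) (n : nat).
Local Notation C := R[i].
Local Notation Re := (@complex.Re R).
Local Notation Im := (@complex.Im R).
Local Notation normc := (@Normc.normc R).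
Local Notation Mx := 'M[C]_n.
Local Notation cv := 'cV[C]_n.
Implicit Types (X H : Mx) (x : cv).

Lemma normc_qform_le X x :
  normc (qform X x) <= (\sum_k \sum_i normc (X i k)) * vnorm x ^+ 2.
Proof.
rewrite /qform mxE (le_trans (normc_sum _ _ _)) // mulr_suml.
apply: ler_sum => k _; rewrite mxE Normc.normcM mulr_suml.
apply: (le_trans (ler_wpM2r (normc_ge0 _) (normc_sum _ _ _))).
rewrite mulr_suml; apply: ler_sum => i _.
rewrite Normc.normcM mxstarE normc_conjc mulrAC [_ * vnorm x ^+ 2]mulrC.
apply: ler_wpM2r; first exact: normc_ge0.
by rewrite expr2; apply: ler_pM; rewrite ?normc_ge0 ?vnorm_entry.
Qed.

Lemma psd_shift_hermitian H :
  hermitian H -> psd (H + (\sum_k \sum_i normc (H i k))%:C%:M).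
Proof.
move=> hH; split=> [|x]; first exact/hermitianD/hermitian_scalar.
rewrite qformD qform_scalar (hermitian_qform_real x hH) -rmorphM -rmorphD ler0c.
have := normc_qform_le H x; rewrite (hermitian_qform_real x hH) normc_rC.
by move=> qle; have := ler_norm (- Re (qform H x)); rewrite normrN; lra.
Qed.

(* A hermitian [H] is the difference of the psd matrices [H + c] and [c]. *)
Lemma hermitian_psd_preserving (S : {linear Mx -> Mx}) H :
  (forall X, psd X -> psd (S X)) -> hermitian H -> hermitian (S H).
Proof.
move=> Spsd hH; set c := \sum_k \sum_i normc (H i k).
have -> : S H = S (H + c%:C%:M) - c%:C *: S 1%:M.
  by rewrite linearD -[c%:C%:M]scalemx1 linearZ addrK.
apply: hermitianB; first by case: (Spsd _ (psd_shift_hermitian hH)).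
by apply: hermitianZ; case: (Spsd _ (psd_scalar n (@ler01 R))).
Qed.

Lemma hermitian_ReM X : hermitian (X - iC R *: ImM X).
Proof.
rewrite /hermitian mxstarB mxstarZ (hermitian_ImM X).
have -> : conjc (iC R) = - iC R by apply/eqP; rewrite eq_complex /= oppr0 !eqxx.
apply/eqP; rewrite scaleNr opprK eq_sym subr_eq -addrA -mulr2n scalerMnl.
by rewrite -mulr_natl ImM_scale addrC subrK eqxx.
Qed.

Lemma Im_qform_psd_preserving (S : {linear Mx -> Mx}) X x :
  (forall Y, psd Y -> psd (S Y)) -> psd (ImM X) -> 0 <= Im (qform (S X) x).
Proof.
move=> Spsd ImX_psd.
rewrite -[X](subrK (iC R *: ImM X)) linearD [S (_ *: _)]linearZ qformD qformZ ImD.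
rewrite (hermitian_qform_real x (hermitian_psd_preserving Spsd (hermitian_ReM X))).
have [-> ge0] := psd_qform x (Spsd _ ImX_psd).
by rewrite Im_mul /= mul0r mul1r !add0r.
Qed.

(* With [y = M x], [Im (x^* M x) = - Im (y^* M^-1 y)], which the Dyson equation
   splits into [Im z |y|^2 - Im (y^* A y) + Im (y^* S[M] y)]. *)
Lemma MDE_Im_qform_ge (A : Mx) (S : {linear Mx -> Mx}) (M : Mx) (z : C) x :
  data_pair A S -> M \in unitmx -> - invmx M = z%:M - A + S M ->
  psd (ImM M) -> Im z * vnorm (M *m x) ^+ 2 <= Im (qform M x).
Proof.
move=> [ImA_le0 [_ Spsd]] Mu MDE ImM_psd.
set y := M *m x.
have -> : qform M x = conjc (qform (invmx M) y).
  by rewrite -qform_mxstar /qform -mxstarM /y mulmxA mulKmx.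
rewrite Im_conjc -ImN -qformN MDE !qformD qformN qform_scalar !ImD ImN.
rewrite Im_mul /= mulr0 add0r -addrA lerDl.
apply: addr_ge0; last exact: Im_qform_psd_preserving.
by case: ImA_le0 => _ /(_ y); rewrite add0r qformN qform_ImM -rmorphN ler0c.
Qed.
End DysonEquation.

Lemma poisson_kernel_continuous (R : realType) (a b : R) : 0 < b ->
  continuous (fun t : R => b / ((t - a) ^+ 2 + b ^+ 2)).
Proof.
move=> b_gt0 t.
apply: (continuousM (s := fun=> b) (t := fun t => ((t - a) ^+ 2 + b ^+ 2)^-1)).
  exact: cst_continuous.
apply: (continuousV (s := fun t => (t - a) ^+ 2 + b ^+ 2)).
  by rewrite gt_eqF // ltr_wpDl ?sqr_ge0 ?exprn_gt0.
apply: (continuousD (f := fun t => (t - a) ^+ 2)); last exact: cst_continuous.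
have -> : (fun t => (t - a) ^+ 2) = (fun t => t - a) \* (fun t => t - a).
  by apply: funext => s; rewrite /= expr2.
by apply: continuousM; apply: (continuousB (f := id) (g := fun=> a));
  [exact: cvg_id | exact: cst_continuous | exact: cvg_id | exact: cst_continuous].
Qed.

Lemma Rintegral_le_ae (d : measure_display) (T : measurableType d) (R : realType)
    (mu : {measure set T -> \bar R}) (D : set T) (g : T -> R) (c m : R) :
  measurable_fun setT g -> (forall t, 0 <= g t) -> 0 <= c ->
  mu.-negligible (~` D) -> (forall t, D t -> g t <= c) -> mu setT = m%:E ->
  Rintegral mu setT g <= c * m.
Proof.
move=> g_meas g_ge0 c_ge0 D_full g_le muT.
have int_le : (\int[mu]_(t in setT) (g t)%:E <= \int[mu]_(t in setT) (cst c%:E) t)%E.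
  apply: ae_ge0_le_integral => //.
  - by move=> t _; rewrite lee_fin.
  - exact/measurable_realfun.measurable_EFinP.
  - apply: (negligibleS _ D_full) => t /= ngt Dt.
    by apply: ngt => _; rewrite lee_fin g_le.
rewrite integral_cst // muT -EFinM in int_le.
have int_ge0 : (0 <= \int[mu]_(t in setT) (g t)%:E)%E.
  by apply: integral_ge0 => t _; rewrite lee_fin.
rewrite /Rintegral -[c * m]/(fine (c * m)%:E); apply: fine_le => //.
by rewrite ge0_fin_numE // (le_lt_trans int_le) // ltry.
Qed.

Lemma Im_cintegral (R : realType) (mu : {measure set R -> \bar R}) (f : R -> R[i]) :
  complex.Im (cintegral mu f) = Rintegral mu setT (fun t => complex.Im (f t)).
Proof. by rewrite /cintegral ImD Im_mul /= mul0r mul1r !add0r. Qed.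

Section DensityOfStates.
Variables (R : realType) (n : nat).
Local Notation C := R[i].
Local Notation Re := (@complex.Re R).
Local Notation Im := (@complex.Im R).
Local Notation normc := (@Normc.normc R).
Local Notation Mx := 'M[C]_n.
Local Notation cv := 'cV[C]_n.
Variables (V : set R -> Mx) (M : C -> Mx).
Hypotheses (n_gt0 : (0 < n)%N) (V1 : V setT = 1%:M) (Vrepr : matrix_measure_repr V M).

(* [~` supp_rho V] is covered by the countably many rational intervals of
   [rho]-measure zero, and [V] vanishes on each of them. *)
Lemma negligible_compl_supp_rho (x : cv) (mu : {measure set R -> \bar R}) :
  (forall B, measurable B -> psd (V B) /\ Im (qform (V B) x) = 0 /\
     mu B = (Re (qform (V B) x))%:E) ->
  mu.-negligible (~` supp_rho V).
Proof.
move=> mu_x.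
pose F k : set R := if unpickle k is Some pq then
  [set t | ratr pq.1 < t < ratr pq.2 /\ mu `]ratr pq.1, ratr pq.2[%classic = 0%E]
  else set0.
have F_negligible k : mu.-negligible (F k).
  rewrite /F; case: (unpickle k) => [[p q]|]; last exact: negligible_set0.
  have [mu0|mu_neq0] := pselect (mu `]ratr p, ratr q[%classic = 0%E); last first.
    by apply: (negligibleS _ (negligible_set0 mu)) => t [_ /mu_neq0].
  exists `]ratr p, ratr q[%classic; split; [exact: measurable_itv | exact: mu0 |].
  by move=> t /= [pqt _]; rewrite in_itv.
apply: (negligibleS _ (negligible_bigcup F_negligible)) => t /= t_supp.
have [e [e_gt0 rho_le0]] :
    exists e : R, 0 < e /\ rho_meas V [set s | t - e < s < t + e] <= 0.
  apply: contrapT => nrho; apply: t_supp => e e_gt0; rewrite ltNge.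
  by apply/negP => rho_le0; apply: nrho; exists e.
set B := [set s | t - e < s < t + e].
have B_meas : measurable B.
  rewrite (_ : B = `]t - e, t + e[%classic); first exact: measurable_itv.
  by apply/seteqP; split => s; rewrite /= in_itv.
have [VB_psd [_ muB]] := mu_x B B_meas.
have muB0 : mu B = 0%E.
  rewrite muB (psd_trace_le0 VB_psd); first by rewrite /qform mulmx0 mul0mx mxE.
  by move: rho_le0; rewrite /rho_meas Re_mxavg pmulr_rle0 ?invr_gt0 ?ltr0n.
have [p] := @rat_in_itvoo R (t - e) t ltac:(lra); rewrite in_itv /= => /andP[p1 p2].
have [q] := @rat_in_itvoo R t (t + e) ltac:(lra); rewrite in_itv /= => /andP[q1 q2].
exists (pickle (p, q)); first by [].
rewrite /F pickleK; split; first by rewrite p2 q1.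
have pq_B : `]ratr p, ratr q[%classic `<=` B.
  by move=> s /=; rewrite in_itv /= => /andP[s1 s2]; apply/andP; split; lra.
apply/le_anti; rewrite measure_ge0 andbT -muB0.
exact: (le_measure mu (mem_set (measurable_itv _)) (mem_set B_meas) pq_B).
Qed.

Lemma supp_rho_neq0 : supp_rho V !=set0.
Proof.
have [mu [mu_x _]] := Vrepr (delta_mx (Ordinal n_gt0) 0).
have muT : mu setT = 1%:E.
  have [_ [_ ->]] := mu_x setT measurableT.
  by rewrite V1 qform_scalar vnorm_delta mul1r expr1n.
apply: contrapT => supp0.
have := negligible_compl_supp_rho mu_x.
rewrite (_ : ~` supp_rho V = setT); last first.
  by apply/seteqP; split => // t _ t_supp; apply: supp0; exists t.
case=> N [N_meas muN0 TN].
have : (mu setT <= mu N)%E by apply: le_measure; rewrite ?inE.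
by rewrite muT muN0 lee_fin ler10.
Qed.

Lemma d_rho_le z t : supp_rho V t -> d_rho V z <= normc (z - rC t).
Proof.
move=> t_supp; apply: ge_inf; last by exists t.
by exists 0 => _ [s _ <-]; apply: normc_ge0.
Qed.

Lemma d_rho_ge_Im z : 0 < Im z -> Im z <= d_rho V z.
Proof.
have [t0 t0_supp] := supp_rho_neq0.
move=> z_pos; apply: lb_le_inf; first by exists (normc (z - rC t0)), t0.
move=> _ [t _ <-]; apply: le_trans (Im_le_normc _).
by rewrite ImB subr0 ler_norm.
Qed.

Lemma Im_qform_le_d_rho z x : 0 < Im z ->
  Im (qform (M z) x) <= Im z / d_rho V z ^+ 2 * vnorm x ^+ 2.
Proof.
move=> z_pos; have [mu [mu_x Mx]] := Vrepr x.
have [_ [_ muT]] := mu_x setT measurableT.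
rewrite V1 qform_scalar mul1r in muT.
have d_gt0 : 0 < d_rho V z := lt_le_trans z_pos (d_rho_ge_Im z_pos).
have kernelE : (fun t => Im ((rC t - z)^-1)) =
    (fun t => Im z / ((t - Re z) ^+ 2 + Im z ^+ 2)).
  by apply/funext => t; apply: Im_inv_real_sub.
rewrite Mx // Im_cintegral kernelE; apply: (Rintegral_le_ae (D := supp_rho V)).
- apply: measurable_realfun.continuous_measurable_fun.
  exact: poisson_kernel_continuous.
- by move=> t; rewrite divr_ge0 ?addr_ge0 ?sqr_ge0 ?(ltW z_pos).
- by rewrite divr_ge0 ?sqr_ge0 ?(ltW z_pos).
- exact: negligible_compl_supp_rho mu_x.
- move=> t t_supp; rewrite -normc_sub_real ler_wpM2l ?(ltW z_pos) //.
  have d_le := d_rho_le z t_supp.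
  rewrite lef_pV2 ?posrE ?exprn_gt0 ?(lt_le_trans d_gt0) //.
  by rewrite ler_sqr ?nnegrE ?(ltW d_gt0) ?(le_trans (ltW d_gt0)).
- exact: muT.
Qed.
End DensityOfStates.

Section ResolventBounds.
Variables (R : realType) (n : nat).
Local Notation C := R[i].
Local Notation Re := (@complex.Re R).
Local Notation Im := (@complex.Im R).
Local Notation normc := (@Normc.normc R).
Local Notation Mx := 'M[C]_n.
Implicit Types (X : Mx) (eta c d : R).

Lemma opnorm_le_inv X eta d : 0 < eta -> 0 < d ->
  (forall x, eta * vnorm (X *m x) ^+ 2 <= eta / d ^+ 2 * vnorm x ^+ 2) ->
  opnorm X <= d^-1.
Proof.
move=> eta_gt0 d_gt0 X_le; apply: opnorm_le => x x1.
have := X_le x; rewrite -mulrA ler_pM2l // => Xx_le.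
rewrite -ler_sqr ?nnegrE ?vnorm_ge0 ?invr_ge0 ?(ltW d_gt0) // exprVn.
by rewrite (le_trans Xx_le) // ler_piMr ?invr_ge0 ?sqr_ge0 ?exprn_ile1 ?vnorm_ge0.
Qed.

Lemma ImM_ge_scalar X eta : X \in unitmx -> 0 <= eta ->
  (forall x, eta * vnorm (X *m x) ^+ 2 <= Im (qform X x)) ->
  mxle (eta * opnorm (invmx X) ^- 2)%:C%:M (ImM X).
Proof.
move=> X_unit eta_ge0 X_low.
apply: mxleP; [exact: hermitian_scalar | exact: hermitian_ImM |] => x.
rewrite qform_scalar qform_ImM -rmorphM /=; apply: le_trans (X_low x).
rewrite -mulrA ler_wpM2l //; set w := opnorm (invmx X).
have [->|w_neq0] := eqVneq w 0; first by rewrite expr0n invr0 mul0r sqr_ge0.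
have w_gt0 : 0 < w by rewrite lt0r w_neq0 opnorm_ge0.
have x_le : vnorm x <= w * vnorm (X *m x).
  by have := opnorm_mulmx (invmx X) (X *m x); rewrite mulmxA mulVmx // mul1mx.
rewrite mulrC ler_pdivrMr ?exprn_gt0 // -exprMn [_ * w]mulrC.
by rewrite ler_sqr ?nnegrE ?mulr_ge0 ?vnorm_ge0 ?opnorm_ge0.
Qed.

Lemma ImM_le_scalar X c : (forall x, Im (qform X x) <= c * vnorm x ^+ 2) ->
  mxle (ImM X) c%:C%:M.
Proof.
move=> X_up; apply: mxleP; [exact: hermitian_ImM | exact: hermitian_scalar |] => x.
by rewrite qform_scalar qform_ImM -rmorphM; apply: X_up.
Qed.

Lemma Re_mxavg_ImM_le X c : (0 < n)%N ->
  (forall x, Im (qform X x) <= c * vnorm x ^+ 2) -> Re (mxavg (ImM X)) <= c.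
Proof.
move=> n_gt0 X_up.
have diag_le i : Re (ImM X i i) <= c.
  rewrite -sesq_delta -qform_sesq qform_ImM /=.
  by have := X_up (delta_mx i 0); rewrite vnorm_delta expr1n mulr1.
have tr_le : Re (\tr (ImM X)) <= n%:R * c.
  rewrite /mxtrace Re_sum (le_trans (ler_sum _ (fun i _ => diag_le i))) //.
  by rewrite sumr_const card_ord mulr_natl.
by rewrite Re_mxavg mulrC ler_pdivrMr ?ltr0n // mulrC.
Qed.

Lemma opnorm_inv_le (A : Mx) (S : {linear Mx -> Mx}) X (z : C) :
  - invmx X = z%:M - A + S X ->
  opnorm (invmx X) <= normc z + opnorm A + opnormS S * opnorm X.
Proof.
move=> MDE; rewrite -[invmx X]opprK MDE opnormN.
apply: le_trans (opnormD _ _) _; apply: lerD; last exact: opnorm_linear_le.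
apply: le_trans (opnormD _ _) _; apply: lerD; first exact: opnorm_scalar.
by rewrite opnormN.
Qed.
End ResolventBounds.

Theorem lemma3p4 (R : realType) (n : nat) (A : 'M[R[i]]_n)
    (S : {linear 'M[R[i]]_n -> 'M[R[i]]_n}) (M : R[i] -> 'M[R[i]]_n)
    (V : set R -> 'M[R[i]]_n) :
  (0 < n)%N ->
  data_pair A S ->
  solves_MDE A S M ->
  V setT = 1%:M ->
  matrix_measure_repr V M ->
  forall z : R[i], 0 < complex.Im z ->
    [/\ opnorm (M z) <= (d_rho V z)^-1,
        mxle (rC (complex.Im z * (opnorm (invmx (M z)))^-2))%:M (ImM (M z)),
        mxle (ImM (M z)) (rC (complex.Im z / d_rho V z ^+ 2))%:M,
        opnorm (invmx (M z)) <= Normc.normc z + opnorm A + opnormS S * opnorm (M z)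
      & rho_harm M z <= complex.Im z / (pi * d_rho V z ^+ 2)].
Proof.
move=> n_gt0 AS_data MDE V1 Vrepr z z_pos.
have [Mz_unit Mz_eq /posdef_psd ImMz_psd] := MDE z z_pos.
have d_gt0 : 0 < d_rho V z := lt_le_trans z_pos (d_rho_ge_Im n_gt0 V1 Vrepr z_pos).
have lower x := MDE_Im_qform_ge x AS_data Mz_unit Mz_eq ImMz_psd.
have upper x := Im_qform_le_d_rho n_gt0 V1 Vrepr x z_pos.
split.
- by apply: opnorm_le_inv z_pos d_gt0 _ => x; apply: le_trans (lower x) (upper x).
- exact: ImM_ge_scalar Mz_unit (ltW z_pos) lower.
- exact: ImM_le_scalar upper.
- exact: opnorm_inv_le Mz_eq.
- rewrite /rho_harm invfM mulrCA; apply: ler_wpM2l; first by rewrite invr_ge0 pi_ge0.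
  exact: Re_mxavg_ImM_le n_gt0 upper.
Qed.
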